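(* Let $w=(w(m))_{m\in2\mathbb{Z}}\in\ell^2(2\mathbb{Z})$, set $V(m)=m\,w(m)$, and for $n\in\mathbb{N}$, $d\in\{n,-n\}$ and $p\in\mathbb{N}$ let $$L(p,d)=\sum_{i_1,\dots,i_p\neq\pm n}\frac{|V(d-i_1)|}{|n^2-i_1^2|}\cdot\frac{|V(i_1-i_2)|}{|n^2-i_2^2|}\cdots\frac{|V(i_{p-1}-i_p)|}{|n^2-i_p^2|},$$ where all summation indices $i_1,\dots,i_p$ range over $n+2\mathbb{Z}$ with $i_\nu\neq\pm n$. Then there exists a sequence of positive numbers $\varepsilon_n\to0$ such that, for all sufficiently large $n$, $$L(s,n)\le\varepsilon_n^s\quad\text{and}\quad L(s,-n)\le\varepsilon_n^s\qquad\forall s\in\mathbb{N}.$$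
   Context: In the application, $w(m)$ are the Fourier coefficients of a $\pi$-periodic $L^2$ function $Q$, $Q(x)=\sum_{m\in2\mathbb{Z}}w(m)e^{imx}$, so that $V(m)$ is (up to a factor $i$) the $m$-th Fourier coefficient of $Q'$; but the statement only uses $w\in\ell^2(2\mathbb{Z})$. *)

From HB Require Import structures.
From mathcomp Require Import all_boot all_order all_algebra.
From mathcomp Require Import all_classical all_reals all_analysis.
Set Implicit Arguments. Unset Strict Implicit. Unset Printing Implicit Defensive.
Import Order.TTheory GRing.Theory Num.Theory.
Import numFieldNormedType.Exports.
Local Open Scope ring_scope.
Local Open Scope classical_set_scope.

(* w : int -> W is a sequence indexed by integers; only its values on 2Z are
   ever used. V(m) = m * w(m), written w m *~ m. *)

Definition admissible (n i : int) : bool :=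
  [&& (2 %| (i - n))%Z, i != n & i != - n].

Fixpoint chain_term (R : realType) (W : normedZmodType R) (w : int -> W)
    (n prev : int) (s : seq int) : R :=
  match s with
  | [::] => 1
  | i :: s' =>
      (`|w (prev - i) *~ (prev - i)| / `|(n ^+ 2 - i ^+ 2)%:~R : R|)
        * chain_term w n i s'
  end.

Definition Lsum (R : realType) (W : normedZmodType R) (w : int -> W)
    (n : int) (p : nat) (d : int) : \bar R :=
  esum [set t : p.-tuple int | all (admissible n) t]
       (fun t => (chain_term w n d t)%:E).

(* Factor |n^2 - j^2| = m_j M_j with m_j = min(|n - j|, |n + j|) and M_j = n + |j|.
   Over a finite admissible index set B, L(p+1, d) is bounded by
   sum_j (|V(d - j)| / M_j) h_p(j), where h_p = T^p h_0 for the kernel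
   T(i, j) = |V(i - j)| / (m_i M_j) and h_0(j) = 1 / m_j.  By Cauchy-Schwarz,
   L(p+1, d)^2 <= |row_d|^2 |T|_HS^(2p) |h_0|^2, and |h_0|^2 <= 8 because
   1/m_j^2 <= 1/(n - j)^2 + 1/(n + j)^2 and sum_(k <> 0) 1/k^2 <= 4.
   Writing |V(k)| = |k| |w(k)|, the frequencies |k| <= N cost a factor N/n because
   M_j >= n, while |k| > N is handled by |k| <= m_i + M_j; this bounds both
   |row_d|^2 |h_0|^2 and |T|_HS^2 by 8 ((N/n)^2 |w|^2 + 4 sum_(|k| > N) |w(k)|^2),
   which vanishes for N = floor(sqrt n). *)

From Stdlib Require PeanoNat.
From HB Require Import structures.
From mathcomp Require Import all_boot all_order all_algebra.
From mathcomp Require Import all_classical all_reals all_analysis.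
From mathcomp Require Import zify ring lra.
Import Order.TTheory GRing.Theory Num.Theory.
Import numFieldNormedType.Exports.
Local Open Scope ring_scope.
Local Open Scope classical_set_scope.
Set Implicit Arguments. Unset Strict Implicit. Unset Printing Implicit Defensive.

Lemma cauchy_schwarz_sum (R : realFieldType) (I : eqType) (r : seq I) (a b : I -> R) :
  (\sum_(i <- r) a i * b i) ^+ 2 <= (\sum_(i <- r) a i ^+ 2) * (\sum_(i <- r) b i ^+ 2).
Proof.
set A := \sum_(i <- r) a i ^+ 2; set C := \sum_(i <- r) a i * b i.
set B := \sum_(i <- r) b i ^+ 2.
have A_ge0 : 0 <= A by apply: sumr_ge0 => i _; exact: sqr_ge0.
have B_ge0 : 0 <= B by apply: sumr_ge0 => i _; exact: sqr_ge0.
have quad_ge0 t : 0 <= t ^+ 2 * A - 2 * t * C + B.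
  have -> : t ^+ 2 * A - 2 * t * C + B = \sum_(i <- r) (t * a i - b i) ^+ 2.
    rewrite /A /C /B !mulr_sumr -sumrN -!big_split /=.
    by apply: eq_bigr => i _; ring.
  by apply: sumr_ge0 => i _; exact: sqr_ge0.
have [A0|A_neq0] := eqVneq A 0.
  have a0 i : i \in r -> a i ^+ 2 = 0.
    move=> ir; apply/eqP; rewrite eq_le sqr_ge0 andbT -A0 /A (big_rem i ir) /= lerDl.
    by apply: sumr_ge0 => j _; exact: sqr_ge0.
  suff -> : C = 0 by rewrite expr0n /= mulr_ge0.
  rewrite /C big_seq big1 // => i /a0 /eqP; rewrite sqrf_eq0 => /eqP ->.
  by rewrite mul0r.
have A_gt0 : 0 < A by rewrite lt_def A_neq0.
(* the discriminant of the nonnegative quadratic [quad_ge0], at its minimum [t = C / A] *)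
have := quad_ge0 (C / A).
have -> : (C / A) ^+ 2 * A - 2 * (C / A) * C + B = B - C ^+ 2 / A by field.
by rewrite subr_ge0 ler_pdivrMr // mulrC.
Qed.

Section KernelIteration.
Variables (R : realType) (W : normedZmodType R) (w : int -> W) (n : int).

Definition chain_factor (i j : int) : R :=
  `|w (i - j) *~ (i - j)| / `|(n ^+ 2 - j ^+ 2)%:~R : R|.

Fixpoint chain_iter (B : seq int) (p : nat) (d : int) : R :=
  if p is p'.+1 then \sum_(j <- B) chain_factor d j * chain_iter B p' j else 1.

Lemma chain_iterS B p d :
  chain_iter B p.+1 d = \sum_(j <- B) chain_factor d j * chain_iter B p j.
Proof. by []. Qed.

Lemma chain_factor_ge0 i j : 0 <= chain_factor i j.
Proof. by rewrite divr_ge0. Qed.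

Lemma chain_iter_ge0 B p d : 0 <= chain_iter B p d.
Proof.
elim: p d => [|p IHp] d /=; first exact: ler01.
by apply: sumr_ge0 => j _; rewrite mulr_ge0 ?chain_factor_ge0.
Qed.

Lemma chain_term_tuple p (t : p.+1.-tuple int) d :
  chain_term w n d t = chain_factor d (thead t) * chain_term w n (thead t) (behead_tuple t).
Proof. by case: t => [[|i s] ?]. Qed.

Lemma thead_behead_inj p (t1 t2 : p.+1.-tuple int) :
  thead t1 = thead t2 -> behead_tuple t1 = behead_tuple t2 -> t1 = t2.
Proof.
case: t1 t2 => [[|i1 s1] ?] [[|i2 s2] ?] //= eq_i /(congr1 val) /= eq_s.
by apply: val_inj; move: eq_i; rewrite /thead /tnth /= => ->; rewrite eq_s.
Qed.

(* Group the chains by their first entry and recurse on the tails. *)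
Lemma sum_chain_term_le_chain_iter B p (s : seq (p.-tuple int)) d : uniq B ->
  uniq s -> (forall t, t \in s -> {subset t <= B}) ->
  \sum_(t <- s) chain_term w n d t <= chain_iter B p d.
Proof.
move=> B_uniq; elim: p s d => [|p IHp] s d s_uniq s_B /=.
  case: s s_uniq {s_B} => [|t1 [|t2 s]] /=; rewrite ?big_nil ?big_cons ?big_nil ?ler01 //.
    by rewrite (tuple0 t1) /= addr0.
  by rewrite (tuple0 t1) (tuple0 t2) inE eqxx.
have head_B t : t \in s -> thead t \in B.
  by move=> /s_B; apply; rewrite /thead (tnth_nth 0) mem_nth ?size_tuple.
have -> : \sum_(t <- s) chain_term w n d t
    = \sum_(j <- B) \sum_(t <- s | thead t == j) chain_factor d j * chain_term w n j (behead_tuple t).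
  under [RHS]eq_bigr do rewrite big_mkcond.
  rewrite exchange_big /=; apply: eq_big_seq => t ts.
  rewrite chain_term_tuple (bigD1_seq (thead t)) ?head_B //= eqxx big1 ?addr0 // => j.
  by rewrite eq_sym => /negPf ->.
apply: ler_sum => j _; rewrite -mulr_sumr ler_wpM2l ?chain_factor_ge0 //.
rewrite -big_filter -(big_map (@behead_tuple _ _) xpredT (chain_term w n j)).
apply: IHp.
  rewrite map_inj_in_uniq ?filter_uniq // => t1 t2.
  rewrite !mem_filter => /andP[/eqP head1 _] /andP[/eqP head2 _].
  by apply: thead_behead_inj; rewrite head1 head2.
move=> t' /mapP[t]; rewrite mem_filter => /andP[_ /s_B t_B] -> i i_t.
by apply: t_B; move: i_t; case: t => [[|x s'] ?] //= i_t; rewrite inE i_t orbT.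
Qed.

End KernelIteration.

Section Factorization.
Variables (R : realType) (W : normedZmodType R) (w : int -> W) (n : int).
Hypothesis n_ge0 : 0 <= n.

Definition near_dist (j : int) : R := (Num.min `|n - j| `|n + j|)%:~R.
Definition far_dist (j : int) : R := (n + `|j|)%:~R.

Lemma normr_sqr_sub_factor (j : int) :
  `|(n ^+ 2 - j ^+ 2)%:~R : R| = near_dist j * far_dist j.
Proof.
rewrite /near_dist /far_dist -intr_norm -rmorphM /=; congr (_%:~R).
have -> : n + `|j| = Num.max `|n - j| `|n + j| by lia.
have -> : Num.min `|n - j| `|n + j| * Num.max `|n - j| `|n + j| = `|n - j| * `|n + j|.
  by case: leP; rewrite // mulrC.
by rewrite -normrM; congr `|_|; ring.
Qed.

Definition far_kernel (i j : int) : R := `|w (i - j) *~ (i - j)| / far_dist j.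
Definition scaled_kernel (i j : int) : R := far_kernel i j / near_dist i.
Definition scaled_iter B p (j : int) : R := chain_iter w n B p j / near_dist j.

Lemma chain_iter_far B p d :
  chain_iter w n B p.+1 d = \sum_(j <- B) far_kernel d j * scaled_iter B p j.
Proof.
rewrite chain_iterS; apply: eq_bigr => j _.
by rewrite /chain_factor /far_kernel /scaled_iter normr_sqr_sub_factor invfM; ring.
Qed.

Lemma scaled_iterS B p i :
  scaled_iter B p.+1 i = \sum_(j <- B) scaled_kernel i j * scaled_iter B p j.
Proof.
by rewrite {1}/scaled_iter chain_iter_far mulr_suml; apply: eq_bigr => j _; rewrite /scaled_kernel; ring.
Qed.

Definition scaled_kernel_hs2 B : R := \sum_(i <- B) \sum_(j <- B) scaled_kernel i j ^+ 2.
Definition far_row2 B d : R := \sum_(j <- B) far_kernel d j ^+ 2.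
Definition near_inv2 B : R := \sum_(j <- B) (near_dist j)^-1 ^+ 2.

Lemma scaled_iter_norm2_le B p :
  \sum_(j <- B) scaled_iter B p j ^+ 2 <= scaled_kernel_hs2 B ^+ p * near_inv2 B.
Proof.
have hs_ge0 : 0 <= scaled_kernel_hs2 B.
  by do 2!apply: sumr_ge0 => ? _; exact: sqr_ge0.
elim: p => [|p IHp].
  by rewrite expr0 mul1r le_eqVlt (eq_bigr _ (fun j _ => congr1 (fun x => x ^+ 2) (div1r _))) eqxx.
rewrite exprS -mulrA; apply: le_trans _ (ler_wpM2l hs_ge0 IHp).
rewrite /scaled_kernel_hs2 mulr_suml; apply: ler_sum => i _.
by rewrite scaled_iterS; apply: cauchy_schwarz_sum.
Qed.

Lemma chain_iter_le_pow B d (e : R) : 0 <= e ->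
  far_row2 B d * near_inv2 B <= e ^+ 2 -> scaled_kernel_hs2 B <= e ^+ 2 ->
  forall p, chain_iter w n B p d <= e ^+ p.
Proof.
move=> e_ge0 row_le hs_le [|p]; first by rewrite expr0.
rewrite -(ler_sqr (x := chain_iter w n B p.+1 d)) ?nnegrE ?chain_iter_ge0 ?exprn_ge0 //.
have row_ge0 : 0 <= far_row2 B d by apply: sumr_ge0 => j _; exact: sqr_ge0.
have near_ge0 : 0 <= near_inv2 B by apply: sumr_ge0 => j _; exact: sqr_ge0.
have hs_ge0 : 0 <= scaled_kernel_hs2 B.
  by do 2!apply: sumr_ge0 => ? _; exact: sqr_ge0.
rewrite chain_iter_far; apply: le_trans (cauchy_schwarz_sum _ _ _) _.
apply: le_trans (ler_wpM2l row_ge0 (scaled_iter_norm2_le B p)) _.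
rewrite mulrCA mulrC -exprM mulnC exprM exprS.
by rewrite ler_pM ?mulr_ge0 ?exprn_ge0 // lerXn2r ?nnegrE ?exprn_ge0.
Qed.

End Factorization.

Lemma ler_sum_uniq_subset (R : numDomainType) (T : eqType) (s r : seq T) (f : T -> R) :
  uniq s -> uniq r -> {subset s <= r} -> (forall x, 0 <= f x) ->
  \sum_(x <- s) f x <= \sum_(x <- r) f x.
Proof.
move=> s_uniq r_uniq s_r f_ge0; rewrite [leRHS](bigID (mem s)) /=.
have -> : \sum_(x <- r | x \in s) f x = \sum_(x <- s) f x.
  rewrite -big_filter; apply/perm_big/uniq_perm; rewrite ?filter_uniq // => x.
  by rewrite mem_filter andb_idr //; apply: s_r.
by rewrite lerDl sumr_ge0.
Qed.

Lemma sum_inv_sqr_iota_le (R : realFieldType) (K : nat) :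
  \sum_(k <- iota 1 K) (k%:R^-1 : R) ^+ 2 <= 2 - 2 / K.+1%:R.
Proof.
elim: K => [|K IHK]; first by rewrite big_nil divr1 subrr.
rewrite -(addn1 K) iotaD big_cat big_seq1 /= add1n addn1.
apply: le_trans (lerD IHK (lexx _)) _; rewrite -subr_ge0.
(* telescoping: [1/(K+1)^2 <= 2/(K+1) - 2/(K+2)] *)
have -> : 2 - 2 / K.+2%:R - (2 - 2 / K.+1%:R + K.+1%:R^-1 ^+ 2)
    = K%:R / (K.+1%:R ^+ 2 * K.+2%:R) :> R.
  rewrite -[K.+2]addn2 -[K.+1]addn1 !natrD; field.
  by have K_ge0 := ler0n R K; apply/andP; split; apply: lt0r_neq0; lra.
by rewrite divr_ge0 ?mulr_ge0.
Qed.

Lemma sum_inv_sqr_int_le (R : realFieldType) (s : seq int) : uniq s -> 0 \notin s ->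
  \sum_(z <- s) (z%:~R^-1 : R) ^+ 2 <= 4.
Proof.
move=> s_uniq s_neq0; set K := (\sum_(z <- s) `|z|)%N.
set r := [seq k%:Z | k <- iota 1 K] ++ [seq - k%:Z | k <- iota 1 K].
have r_uniq : uniq r.
  rewrite cat_uniq !map_inj_uniq ?iota_uniq //; try by move=> ? ?; lia.
  rewrite /= andbT; apply/hasPn => _ /mapP[k k_in ->]; apply/mapP => -[k' k'_in] /eqP.
  by move: k_in k'_in; rewrite !mem_iota; lia.
have s_r : {subset s <= r}.
  move=> z z_s; have z_le : (`|z| <= K)%N by rewrite /K (big_rem z z_s) leq_addr.
  have z_neq0 : z != 0 by apply: contraNneq s_neq0 => <-.
  rewrite mem_cat; case: z {z_s} z_le z_neq0 => k /= k_le k_neq0.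
    by apply/orP; left; apply/mapP; exists k; rewrite // mem_iota; lia.
  by apply/orP; right; apply/mapP; exists k.+1; rewrite ?NegzE // mem_iota; lia.
apply: le_trans (ler_sum_uniq_subset s_uniq r_uniq s_r (fun z => sqr_ge0 _)) _.
rewrite /r big_cat !big_map /=.
under [X in _ + X]eq_bigr do rewrite rmorphN invrN sqrrN.
have sum_le2 : \sum_(k <- iota 1 K) ((k%:Z)%:~R^-1 : R) ^+ 2 <= 2.
  by apply: le_trans (sum_inv_sqr_iota_le R K) _; rewrite gerBl divr_ge0.
by have := lerD sum_le2 sum_le2; lra.
Qed.

Lemma near_dist_gt0 (R : realType) (n j : int) : admissible n j -> 0 < near_dist R n j.
Proof. by case/and3P => _ /eqP ? /eqP ?; rewrite /near_dist ltr0z; lia. Qed.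

Lemma near_inv2_le (R : realType) (n : int) (B : seq int) :
  uniq B -> all (admissible n) B -> near_inv2 R n B <= 8.
Proof.
move=> B_uniq B_adm.
have near_le j : (near_dist R n j)^-1 ^+ 2 <= ((n - j)%:~R^-1) ^+ 2 + ((n + j)%:~R^-1) ^+ 2.
  have normK (z : int) : ((`|z|)%:~R : R)^-1 ^+ 2 = (z%:~R^-1) ^+ 2.
    by rewrite intr_norm -normfV real_normK // num_real.
  by rewrite /near_dist; case: (leP `|n - j| `|n + j|) => _; rewrite normK ?lerDl ?lerDr sqr_ge0.
have shift_le (f : int -> int) : injective f -> (forall j, admissible n j -> f j != 0) ->
    \sum_(j <- B) ((f j)%:~R^-1 : R) ^+ 2 <= 4.
  move=> f_inj f_neq0; rewrite -(big_map f xpredT (fun z => (z%:~R^-1 : R) ^+ 2)).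
  apply: sum_inv_sqr_int_le; first by rewrite map_inj_uniq.
  by apply/mapP => -[j j_B f_j]; have := f_neq0 j (allP B_adm j j_B); rewrite -f_j.
apply: le_trans (ler_sum _ (fun j _ => near_le j)) _.
rewrite big_split /= (_ : 8 = 4 + 4 :> R); last by lra.
apply: lerD; apply: shift_le => [? ?|j]; try lia.
  by case/and3P => _ /eqP ? /eqP ?; apply/eqP; lia.
by case/and3P => _ /eqP ? /eqP ?; apply/eqP; lia.
Qed.

Lemma normr_mulz (R : numDomainType) (W : normedZmodType R) (x : W) (m : int) :
  `|x *~ m| = `|m%:~R : R| * `|x|.
Proof.
case: m => k; first by rewrite -pmulrn normrMn -mulr_natl normr_nat.
by rewrite NegzE mulrNz normrN -pmulrn normrMn -mulr_natl normrN normr_nat.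
Qed.

Lemma sqr_mul_div_le (R : realFieldType) (a x M c : R) :
  0 < M -> 0 <= a -> a <= c * M -> 0 <= x -> (a * x / M) ^+ 2 <= c ^+ 2 * x ^+ 2.
Proof.
move=> M_gt0 a_ge0 a_le x_ge0.
have c_ge0 : 0 <= c by rewrite -(pmulr_lge0 _ M_gt0) (le_trans a_ge0 a_le).
rewrite -exprMn lerXn2r ?nnegrE ?divr_ge0 ?mulr_ge0 ?(ltW M_gt0) //.
by rewrite ler_pdivrMr // mulrAC; apply: ler_wpM2r.
Qed.

Lemma sqr_mul_div_div_le (R : realFieldType) (a x M m m' : R) :
  0 < m -> 0 < m' -> m' <= M -> 0 <= a -> a <= m + M -> 0 <= x ->
  (a * x / M / m) ^+ 2 <= 2 * x ^+ 2 * (m'^-1 ^+ 2 + m^-1 ^+ 2).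
Proof.
move=> m_gt0 m'_gt0 m'_le a_ge0 a_le x_ge0.
have M_gt0 : 0 < M by lra.
have lhs_ge0 : 0 <= a * x / M / m by rewrite !divr_ge0 ?mulr_ge0 //; lra.
have lhs_le : a * x / M / m <= x * (m'^-1 + m^-1).
  apply: le_trans (_ : _ <= (m + M) * x / M / m) _.
    by rewrite 2?ler_pM2r ?invr_gt0 //; apply: ler_wpM2r.
  have -> : (m + M) * x / M / m = x * (M^-1 + m^-1) by field; rewrite !lt0r_neq0.
  by apply: ler_wpM2l => //; rewrite lerD2r lef_pV2 ?posrE.
apply: le_trans (lerXn2r 2 _ _ lhs_le) _; rewrite ?nnegrE ?(le_trans lhs_ge0 lhs_le) //.
set p := m'^-1; set q := m^-1.
have -> : 2 * x ^+ 2 * (p ^+ 2 + q ^+ 2) = x ^+ 2 * (2 * (p ^+ 2 + q ^+ 2)) by ring.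
rewrite exprMn; apply: ler_wpM2l; first exact: sqr_ge0.
by have := sqr_ge0 (p - q); nra.
Qed.

Section FrequencySplit.
Variables (R : realType) (W : normedZmodType R) (w : int -> W).

Definition even_mass_le (P : pred int) (X : R) : Prop :=
  forall s : seq int, uniq s -> all (fun z => (2 %| z)%Z && P z) s ->
    \sum_(z <- s) `|w z| ^+ 2 <= X.

Lemma even_mass_le_ge0 P X : even_mass_le P X -> 0 <= X.
Proof. by move/(_ [::] isT isT); rewrite big_nil. Qed.

Lemma sum_even_mass_le P X (f : int -> int) (B : seq int) :
  even_mass_le P X -> uniq B -> injective f -> (forall j, j \in B -> (2 %| f j)%Z) ->
  \sum_(j <- B | P (f j)) `|w (f j)| ^+ 2 <= X.
Proof.
move=> P_mass B_uniq f_inj f_even.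
rewrite -(big_map f P (fun z => `|w z| ^+ 2)) -big_filter.
apply: P_mass; first by rewrite filter_uniq // map_inj_uniq.
apply/allP => z; rewrite mem_filter => /andP[Pz /mapP[j j_B z_eq]].
by rewrite Pz andbT z_eq f_even.
Qed.

Variables (n : int) (B : seq int) (N : int) (S T : R).
Hypotheses (n_gt0 : 0 < n) (B_uniq : uniq B) (B_adm : all (admissible n) B).
Hypotheses (low_mass : even_mass_le (fun z => `|z| <= N) S)
  (high_mass : even_mass_le (fun z => ~~ (`|z| <= N)) T).

Local Notation c := ((N%:~R / n%:~R : R) ^+ 2).

Lemma far_dist_gt0 j : 0 < far_dist R n j.
Proof. by rewrite ltr0z; lia. Qed.

Lemma low_freq_le (k j : int) : `|k| <= N ->
  `|k%:~R : R| <= N%:~R / n%:~R * far_dist R n j.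
Proof.
move=> k_le; rewrite -intr_norm; apply: le_trans (_ : _ <= N%:~R) _.
  by rewrite ler_int.
rewrite mulrAC -mulrA ler_peMr ?ler0z ?(le_trans (normr_ge0 _) k_le) //.
by rewrite ler_pdivlMr ?ltr0z // mul1r ler_int; lia.
Qed.

Lemma far_row2_le d : d = n \/ d = - n -> far_row2 w n B d <= c * S + T.
Proof.
move=> d_eq; have d_even j : j \in B -> (2 %| d - j)%Z.
  by move=> /(allP B_adm) /and3P[j_even _ _]; lia.
have d_inj : injective (fun j => d - j) by move=> ? ?; lia.
rewrite /far_row2 (bigID (fun j => `|d - j| <= N)) /=; apply: lerD.
  apply: le_trans (_ : _ <= \sum_(j <- B | `|d - j| <= N) c * `|w (d - j)| ^+ 2) _.
    apply: ler_sum => j low; rewrite /far_kernel normr_mulz.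
    by rewrite sqr_mul_div_le ?far_dist_gt0 ?low_freq_le.
  by rewrite -mulr_sumr ler_wpM2l ?sqr_ge0 // (sum_even_mass_le low_mass).
apply: le_trans (_ : _ <= \sum_(j <- B | ~~ (`|d - j| <= N)) `|w (d - j)| ^+ 2) _.
  apply: ler_sum => j _; rewrite /far_kernel normr_mulz.
  have := @sqr_mul_div_le _ `|(d - j)%:~R| `|w (d - j)| (far_dist R n j) 1.
  rewrite expr1n !mul1r; apply; rewrite ?far_dist_gt0 // -intr_norm ler_int; lia.
exact: (sum_even_mass_le high_mass).
Qed.

Lemma scaled_kernel_row2_le i : i \in B ->
  \sum_(j <- B) scaled_kernel w n i j ^+ 2 <= (c * S + 2 * T) * (near_dist R n i)^-1 ^+ 2
    + 2 * \sum_(j <- B | ~~ (`|i - j| <= N)) `|w (i - j)| ^+ 2 * (near_dist R n j)^-1 ^+ 2.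
Proof.
move=> i_B; have i_adm := allP B_adm i i_B.
have i_even j : j \in B -> (2 %| i - j)%Z.
  by move: i_adm => /and3P[? _ _] /(allP B_adm) /and3P[? _ _]; lia.
have i_inj : injective (fun j => i - j) by move=> ? ?; lia.
set mi := (near_dist R n i)^-1 ^+ 2; have mi_ge0 : 0 <= mi by exact: sqr_ge0.
rewrite (bigID (fun j => `|i - j| <= N)) /= mulrDl -addrA; apply: lerD.
  apply: le_trans (_ : _ <= \sum_(j <- B | `|i - j| <= N) c * mi * `|w (i - j)| ^+ 2) _.
    apply: ler_sum => j low; rewrite /scaled_kernel /far_kernel normr_mulz.
    rewrite exprMn -/mi [leRHS]mulrAC; apply: ler_wpM2r => //.
    by rewrite sqr_mul_div_le ?far_dist_gt0 ?low_freq_le.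
  by rewrite -mulr_sumr mulrAC ler_wpM2r // ler_wpM2l ?sqr_ge0 // (sum_even_mass_le low_mass).
apply: le_trans (_ : _ <= \sum_(j <- B | ~~ (`|i - j| <= N))
    (2 * mi * `|w (i - j)| ^+ 2 + 2 * (`|w (i - j)| ^+ 2 * (near_dist R n j)^-1 ^+ 2))) _.
  rewrite big_seq_cond [leRHS]big_seq_cond; apply: ler_sum => j /andP[j_B _].
  rewrite /scaled_kernel /far_kernel normr_mulz.
  apply: le_trans (sqr_mul_div_div_le _ _ _ _ _ _) _.
  - exact: near_dist_gt0.
  - exact: near_dist_gt0 (allP B_adm j j_B).
  - by rewrite /near_dist /far_dist ler_int; lia.
  - by rewrite normr_ge0.
  - by rewrite -intr_norm /near_dist /far_dist -rmorphD ler_int; lia.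
  - by rewrite normr_ge0.
  - by rewrite le_eqVlt -/mi; apply/orP; left; apply/eqP; ring.
rewrite big_split /= -mulr_sumr -mulr_sumr lerD2r mulrAC ler_wpM2r //.
by rewrite ler_wpM2l // (sum_even_mass_le high_mass).
Qed.

Lemma scaled_kernel_hs2_le : scaled_kernel_hs2 w n B <= 8 * (c * S + 4 * T).
Proof.
have S_ge0 := even_mass_le_ge0 low_mass; have T_ge0 := even_mass_le_ge0 high_mass.
have near_le := near_inv2_le R B_uniq B_adm.
rewrite /scaled_kernel_hs2 big_seq; apply: le_trans (ler_sum _ scaled_kernel_row2_le) _.
rewrite -big_seq big_split /= -mulr_sumr -mulr_sumr.
have -> : \sum_(i <- B) \sum_(j <- B | ~~ (`|i - j| <= N))
              `|w (i - j)| ^+ 2 * (near_dist R n j)^-1 ^+ 2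
        = \sum_(j <- B) (near_dist R n j)^-1 ^+ 2 *
              \sum_(i <- B | ~~ (`|i - j| <= N)) `|w (i - j)| ^+ 2.
  rewrite (exchange_big_dep xpredT) //=; apply: eq_bigr => j _.
  by rewrite mulr_sumr; apply: eq_bigr => i _; rewrite mulrC.
have high_le : \sum_(j <- B) (near_dist R n j)^-1 ^+ 2 *
    \sum_(i <- B | ~~ (`|i - j| <= N)) `|w (i - j)| ^+ 2 <= T * near_inv2 R n B.
  rewrite /near_inv2 mulr_sumr big_seq [leRHS]big_seq; apply: ler_sum => j j_B.
  rewrite mulrC; apply: ler_wpM2r; first exact: sqr_ge0.
  apply: (sum_even_mass_le (f := fun i => i - j) high_mass) => // [? ?|i /(allP B_adm)]; first lia.
  by move: (allP B_adm j j_B) => /and3P[? _ _] /and3P[? _ _]; lia.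
have mass_ge0 : 0 <= c * S + 4 * T by apply: addr_ge0; rewrite mulr_ge0 ?sqr_ge0.
have := ler_wpM2l mass_ge0 near_le; rewrite -/(near_inv2 R n B); move: high_le.
set V := near_inv2 R n B; set X := \sum_(j <- B) _; set cS := c * S; lra.
Qed.

Lemma chain_iter_le_pow_mass (e : R) : 0 <= e -> 8 * (c * S + 4 * T) <= e ^+ 2 ->
  forall d, d = n \/ d = - n -> forall p, chain_iter w n B p d <= e ^+ p.
Proof.
move=> e_ge0 mass_le d d_eq; have S_ge0 := even_mass_le_ge0 low_mass.
have T_ge0 := even_mass_le_ge0 high_mass; have cS_ge0 : 0 <= c * S by rewrite mulr_ge0 ?sqr_ge0.
apply: chain_iter_le_pow => //; first exact: ltW.
  apply: le_trans _ mass_le.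
  apply: le_trans (ler_pM _ _ (far_row2_le d_eq) (near_inv2_le R B_uniq B_adm)) _.
  - by apply: sumr_ge0 => j _; exact: sqr_ge0.
  - by apply: sumr_ge0 => j _; exact: sqr_ge0.
  - lra.
exact: le_trans scaled_kernel_hs2_le mass_le.
Qed.

End FrequencySplit.

Lemma Lsum_le_pow (R : realType) (W : normedZmodType R) (w : int -> W) (n N : int) (S T e : R) :
  0 < n -> 0 <= e ->
  even_mass_le w (fun z => `|z| <= N) S -> even_mass_le w (fun z => ~~ (`|z| <= N)) T ->
  8 * ((N%:~R / n%:~R) ^+ 2 * S + 4 * T) <= e ^+ 2 ->
  forall d, d = n \/ d = - n -> forall p, (Lsum w n p d <= (e ^+ p)%:E)%E.
Proof.
move=> n_gt0 e_ge0 low_mass high_mass mass_le d d_eq p.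
rewrite /Lsum /esum; apply: ge_ereal_sup => _ [X [X_fin X_adm] <-].
case/finite_seqP: X_fin X_adm => ts -> ts_adm.
have -> : [set` ts] = [set` undup ts] by apply/seteqP; split=> t /=; rewrite mem_undup.
rewrite -fsbig_seq ?undup_uniq // sumEFin lee_fin.
set B := undup (flatten [seq tval t | t <- ts]).
have B_adm : all (admissible n) B.
  apply/allP => i; rewrite mem_undup => /flattenP[l /mapP[t t_ts ->]].
  exact: (allP (ts_adm t t_ts)).
apply: le_trans (@sum_chain_term_le_chain_iter _ _ w n B p _ d (undup_uniq _) (undup_uniq _) _) _.
  move=> t; rewrite mem_undup => t_ts i i_t; rewrite /B mem_undup; apply/flattenP.
  by exists (tval t) => //; apply/mapP; exists t.
exact: (chain_iter_le_pow_mass n_gt0 (undup_uniq _) B_adm low_mass high_mass e_ge0 mass_le d_eq).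
Qed.

Lemma esum_subset_le (R : realType) (T : choiceType) (A D : set T) (F : T -> \bar R) :
  A `<=` D -> (esum A F <= esum D F)%E.
Proof.
move=> AD; apply: ge_ereal_sup => _ [X [X_fin XA] <-].
by apply: ereal_sup_ubound; exists X => //; split=> //; exact: subset_trans AD.
Qed.

Section SummableMass.
Variables (R : realType) (D : set int) (f : int -> R).
Hypotheses (f_ge0 : forall z, 0 <= f z) (f_summable : summable D (fun z => (f z)%:E)).

Lemma fine_esum_ge0 (A : set int) : 0 <= fine (esum A (fun z => (f z)%:E)).
Proof. by rewrite fine_ge0 // esum_ge0 // => z _; rewrite lee_fin. Qed.

Lemma esum_subset_fineK (A : set int) : A `<=` D ->
  esum A (fun z => (f z)%:E) = (fine (esum A (fun z => (f z)%:E)))%:E.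
Proof.
move=> AD; rewrite fineK // ge0_fin_numE ?esum_ge0 // => [|z _]; last by rewrite lee_fin.
apply: le_lt_trans (esum_subset_le _ AD) _; move: f_summable; rewrite /summable.
by under eq_esum do rewrite gee0_abs ?lee_fin //.
Qed.

Lemma sum_le_fine_esum (A : set int) (s : seq int) : A `<=` D ->
  uniq s -> (forall z, z \in s -> A z) -> \sum_(z <- s) f z <= fine (esum A (fun z => (f z)%:E)).
Proof.
move=> AD s_uniq s_A; rewrite -lee_fin -esum_subset_fineK //; apply: esum_ge.
by exists [set` s]; [split=> [|z /s_A] //; exact: finite_seq | rewrite -sumEFin fsbig_seq].
Qed.

Definition tail_mass (N : nat) : R :=
  fine (esum (D `&` ~` [set z | `|z| <= N%:Z]) (fun z => (f z)%:E)).

Lemma tail_mass_cvg0 : tail_mass N @[N --> \oo] --> 0.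
Proof.
apply/cvgrPdist_le => eta eta_gt0.
have tot_fin : esum D (fun z => (f z)%:E) \is a fin_num.
  by rewrite (esum_subset_fineK (@subset_refl _ D)).
have [_ [X [X_fin XD] <-] X_gt] := ub_ereal_sup_adherent eta_gt0 tot_fin.
case/finite_seqP: X_fin XD X_gt => s -> sD s_gt.
exists (\sum_(z <- s) `|z|)%N => // N /= N_ge.
have tot_split : fine (esum D (fun z => (f z)%:E))
    = fine (esum (D `&` [set z | `|z| <= N%:Z]) (fun z => (f z)%:E)) + tail_mass N.
  apply: EFin_inj; rewrite EFinD -!esum_subset_fineK ?subIsetl //.
  by apply: esumID => z _; rewrite lee_fin.
have low_ge : \sum_(z <- undup s) f z
    <= fine (esum (D `&` [set z | `|z| <= N%:Z]) (fun z => (f z)%:E)).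
  apply: sum_le_fine_esum; [exact: subIsetl | exact: undup_uniq | move=> z].
  rewrite mem_undup => z_s; split; first exact: sD.
  by rewrite (big_rem z z_s) /= in N_ge; rewrite /=; lia.
move: s_gt; rewrite -/(esum D (fun z => (f z)%:E)) (esum_subset_fineK (@subset_refl _ D)) -EFinB.
have -> : [set` s] = [set` undup s] by apply/seteqP; split=> z /=; rewrite mem_undup.
rewrite -fsbig_seq ?undup_uniq // sumEFin lte_fin => s_gt.
by rewrite sub0r normrN ger0_norm ?fine_esum_ge0 //; lra.
Qed.

End SummableMass.

Lemma sqrt_nat_sqr_le (n : nat) : (Nat.sqrt n * Nat.sqrt n <= n)%N.
Proof. by have [+ _] := PeanoNat.Nat.sqrt_spec n (PeanoNat.Nat.le_0_l n); lia. Qed.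

Lemma sqrt_nat_cvgy : Nat.sqrt n @[n --> \oo] --> \oo.
Proof.
apply/cvgnyPge => M; exists (M * M)%N => // n /= n_ge.
have : (Nat.sqrt (M * M)%coq_nat <= Nat.sqrt n)%coq_nat.
  by apply: PeanoNat.Nat.sqrt_le_mono; lia.
by rewrite PeanoNat.Nat.sqrt_square; lia.
Qed.

Lemma invn_cvg0 (R : realType) : (n%:R^-1 : R) @[n --> \oo] --> 0.
Proof. by rewrite -cvg_shiftS; exact: cvg_harmonic. Qed.

Section Epsilon.
Variables (R : realType) (W : normedZmodType R) (w : int -> W).
Hypothesis w_summable : summable [set m : int | (2 %| m)%Z] (fun m => (`|w m| ^+ 2)%:E).

Local Notation D := [set m : int | (2 %| m)%Z].
Local Notation f := (fun m => `|w m| ^+ 2).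

Let w_sqr_ge0 m : 0 <= `|w m| ^+ 2 := sqr_ge0 _.

Definition sqr_mass : R := fine (esum D (fun m => (f m)%:E)).

Lemma sqr_mass_ge0 : 0 <= sqr_mass.
Proof. exact: fine_esum_ge0. Qed.

Lemma even_mass_le_mass (P : pred int) : even_mass_le w P sqr_mass.
Proof.
move=> s s_uniq s_P.
apply: (sum_le_fine_esum w_sqr_ge0 w_summable (@subset_refl _ D) s_uniq).
by move=> z /(allP s_P) /andP[].
Qed.

Lemma even_mass_le_tail (N : nat) :
  even_mass_le w (fun z => ~~ (`|z| <= N%:Z)) (tail_mass D f N).
Proof.
move=> s s_uniq s_P.
apply: (sum_le_fine_esum w_sqr_ge0 w_summable (@subIsetl _ D _) s_uniq).
by move=> z /(allP s_P) /andP[z_even /negP z_high].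
Qed.

Definition eps_sqr (n : nat) : R :=
  8 * (sqr_mass / n%:R + 4 * tail_mass D f (Nat.sqrt n)) + n.+1%:R^-1.

Lemma eps_sqr_gt0 n : 0 < eps_sqr n.
Proof.
by rewrite ltr_wpDl ?invr_gt0 // mulr_ge0 // addr_ge0 ?mulr_ge0 ?divr_ge0 ?sqr_mass_ge0 ?(fine_esum_ge0 w_sqr_ge0).
Qed.

Lemma eps_sqr_cvg0 : eps_sqr n @[n --> \oo] --> 0.
Proof.
have tail_cvg := cvg_comp _ _ sqrt_nat_cvgy (tail_mass_cvg0 w_sqr_ge0 w_summable).
rewrite -[0](_ : 8 * (sqr_mass * 0 + 4 * 0) + 0 = 0); last by rewrite !(mulr0, addr0).
apply: cvgD; last exact: cvg_harmonic.
apply: cvgMl_tmp; apply: cvgD; first by apply: cvgMl_tmp; exact: invn_cvg0.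
by apply: cvgMl_tmp.
Qed.

Lemma Lsum_le_eps_sqr n : (0 < n)%N -> forall d, d = n%:Z \/ d = - n%:Z ->
  forall p, (Lsum w n%:Z p d <= (Num.sqrt (eps_sqr n) ^+ p)%:E)%E.
Proof.
move=> n_gt0 d d_eq p.
apply: (@Lsum_le_pow R W w n%:Z (Nat.sqrt n)%:Z sqr_mass (tail_mass D f (Nat.sqrt n))) => //.
- exact: even_mass_le_mass.
- exact: even_mass_le_tail.
have n_pos : 0 < n%:R :> R by rewrite ltr0n.
have ratio_le : ((Nat.sqrt n)%:Z%:~R / n%:Z%:~R : R) ^+ 2 <= n%:R^-1.
  rewrite -[_%:Z%:~R]/((Nat.sqrt n)%:R) -[n%:Z%:~R]/(n%:R) expr_div_n.
  rewrite ler_pdivrMr ?exprn_gt0 // [n%:R ^+ 2]expr2 mulrA mulVf ?gt_eqF // mul1r.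
  by rewrite -natrX ler_nat -mulnn sqrt_nat_sqr_le.
have mass_le := ler_wpM2r sqr_mass_ge0 ratio_le.
rewrite sqr_sqrtr /eps_sqr; last exact: ltW (eps_sqr_gt0 n).
apply: le_trans (_ : _ <= 8 * (sqr_mass / n%:R + 4 * tail_mass D f (Nat.sqrt n))) _.
  by rewrite ler_pM2l // lerD2r [sqr_mass / _]mulrC.
by rewrite lerDl invr_ge0.
Qed.

End Epsilon.

Unset Implicit Arguments.
Theorem lemma2 (R : realType) (W : normedZmodType R) (w : int -> W) :
  summable [set m : int | (2 %| m)%Z] (fun m => (`|w m| ^+ 2)%:E) ->
  exists eps : nat -> R,
    (forall n, 0 < eps n) /\ eps @ \oo --> 0 /\
    \forall n \near \oo, forall s : nat,
      (Lsum w n%:Z s n%:Z <= (eps n ^+ s)%:E)%E /\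
      (Lsum w n%:Z s (- n%:Z) <= (eps n ^+ s)%:E)%E.
Proof.
move=> w_summable; exists (fun n => Num.sqrt (eps_sqr w n)); split.
  by move=> n; rewrite sqrtr_gt0 eps_sqr_gt0.
split.
  by rewrite -sqrtr0; apply: cvg_comp (eps_sqr_cvg0 w_summable) _; exact: sqrt_continuous.
exists 1%N => // n /= n_gt0 p.
by split; apply: Lsum_le_eps_sqr => //; [left | right].
Qed.
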